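(* Let $k$ be a field containing all $m$-th roots of unity, with $p\nmid m$ if $\operatorname{char}(k)=p>0$. Let $\mathcal A$ be a perfect $k$-algebra, $S$ a commutative associative unital $k$-algebra, $\sigma_1\in\operatorname{Aut}(\mathcal A)$, $\sigma_2\in\operatorname{Aut}(S)$ with $\sigma_1^m=\mathrm{id}$, $\sigma_2^m=\mathrm{id}$; assume $S_{\bar 1}$ contains an invertible element $u$ of $S$, and that $\psi:C(\mathcal A)\otimes S\to C(\mathcal A\otimes S)$, $\gamma\otimes s\mapsto\gamma\otimes L_s$, is an isomorphism. Then the restriction map $\pi:\mathcal D(\mathcal A\otimes S)_{\bar 0}\to\mathcal D((\mathcal A\otimes S)_{\bar 0})$, $D\mapsto D|_{(\mathcal A\otimes S)_{\bar 0}}$, is surjective.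
   Context: Algebras are $k$-vector spaces with bilinear product (not necessarily associative); perfect means $\mathcal A\mathcal A=\mathcal A$; $C(\mathcal A)$ is the centroid $\{\gamma\in\operatorname{End}(\mathcal A)\mid\gamma(xy)=\gamma(x)y=x\gamma(y)\}$; $\mathcal D$ denotes derivations; $L_s$ is left multiplication. Fix a primitive $m$-th root of unity $\omega$; $\mathcal A_{\bar i}=\{a\mid\sigma_1(a)=\omega^ia\}$, $S_{\bar i}=\{s\mid\sigma_2(s)=\omega^is\}$, $(\mathcal A\otimes S)_{\bar i}=\sum_{\bar j}\mathcal A_{\bar i-\bar j}\otimes S_{\bar j}$; $(\mathcal A\otimes S)_{\bar 0}$ is the fixed-point subalgebra of $\sigma_1\otimes\sigma_2$; $\mathcal D(\mathcal A\otimes S)_{\bar 0}$ is the set of derivations of $\mathcal A\otimes S$ mapping each $(\mathcal A\otimes S)_{\bar j}$ into itself. *)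

From HB Require Import structures.
From mathcomp Require Import all_boot all_order all_algebra.
Set Implicit Arguments. Unset Strict Implicit. Unset Printing Implicit Defensive.
Import GRing.Theory.
Local Open Scope ring_scope.

Section Defs.
Variable k : fieldType.

Definition klinear (U V : lmodType k) (f : U -> V) : Prop :=
  forall (a : k) (x y : U), f (a *: x + y) = a *: f x + f y.

Definition kbilinear (U V W : lmodType k) (f : U -> V -> W) : Prop :=
  (forall v : V, klinear (fun u => f u v)) /\ (forall u : U, klinear (f u)).

Definition is_tensor_product (U V T : lmodType k) (t : U -> V -> T) : Prop :=
  kbilinear t /\
  forall (W : lmodType k) (f : U -> V -> W), kbilinear f ->
    (exists g : T -> W, klinear g /\ forall u v, g (t u v) = f u v) /\
    (forall g1 g2 : T -> W, klinear g1 -> klinear g2 ->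
       (forall u v, g1 (t u v) = f u v) -> (forall u v, g2 (t u v) = f u v) ->
       g1 =1 g2).

Definition in_span (T : lmodType k) (P : T -> Prop) (x : T) : Prop :=
  exists n (c : 'I_n -> k) (v : 'I_n -> T),
    (forall i, P (v i)) /\ x = \sum_(i < n) c i *: v i.

Definition perfect (A : lmodType k) (mul : A -> A -> A) : Prop :=
  forall a : A, in_span (fun z => exists x y, z = mul x y) a.

Definition is_derivation (A : lmodType k) (mul : A -> A -> A) (D : A -> A) :=
  klinear D /\ forall x y, D (mul x y) = mul (D x) y + mul x (D y).

Definition in_centroid (A : lmodType k) (mul : A -> A -> A) (g : A -> A) :=
  klinear g /\ forall x y, g (mul x y) = mul (g x) y /\ g (mul x y) = mul x (g y).

Definition is_alg_aut (A : lmodType k) (mul : A -> A -> A) (s : A -> A) :=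
  klinear s /\ bijective s /\ forall x y, s (mul x y) = mul (s x) (s y).

Definition eigen (A : lmodType k) (s : A -> A) (al : k) (a : A) : Prop :=
  s a = al *: a.

(* the graded piece (A (x) S)_{i} = sum_j A_{i-j} (x) S_j, indices mod m *)
Definition tens_piece (m : nat) (w : k) (A S T : lmodType k) (t : A -> S -> T)
  (s1 : A -> A) (s2 : S -> S) (i : nat) (x : T) : Prop :=
  in_span (fun y => exists (j : 'I_m) (a : A) (s : S),
     eigen s1 (w ^+ (i + (m - j))) a /\ eigen s2 (w ^+ j) s /\ y = t a s) x.

End Defs.

From HB Require Import structures.
From mathcomp Require Import all_boot all_order all_algebra.
From mathcomp Require Import zify.
Import GRing.Theory.
Local Open Scope ring_scope.

(* With v = u^-1 and L_s = psi (id (x) s), an element x of degree i equals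
   L_{u^i} b with b = L_{v^i} x of degree 0.  A graded derivation D extending d
   must therefore satisfy D (L_{u^i} b) = L_{u^i} (d b) + i L_{u^(i-1)} (D(u) b),
   and multiplication by D(u) is already determined by d: on the degree-0 part
   [d, L_{u^m}] = m L_{u^(m-1)} (D(u) .), and m is invertible in k because k
   has a primitive m-th root of unity.  Taking the formula for D as its
   definition, the Leibniz rule in degrees i + j < m is the power rule, and for
   i + j >= m it reduces to this commutator identity. *)

Set Implicit Arguments.
Unset Strict Implicit.
Unset Printing Implicit Defensive.

Section KLinear.
Variables (k : fieldType) (V W : lmodType k).
Implicit Types f g : V -> W.

Lemma klinearD f : klinear f -> forall x y, f (x + y) = f x + f y.
Proof. by move=> lf x y; have := lf 1 x y; rewrite !scale1r. Qed.

Lemma klinear0 f : klinear f -> f 0 = 0.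
Proof. by move=> lf; apply: (addrI (f 0)); rewrite -klinearD // !addr0. Qed.

Lemma klinearZ f : klinear f -> forall a x, f (a *: x) = a *: f x.
Proof. by move=> lf a x; have := lf a x 0; rewrite !addr0 klinear0 // addr0. Qed.

Lemma klinearN f : klinear f -> forall x, f (- x) = - f x.
Proof. by move=> lf x; rewrite -scaleN1r klinearZ // scaleN1r. Qed.

Lemma klinearB f : klinear f -> forall x y, f (x - y) = f x - f y.
Proof. by move=> lf x y; rewrite klinearD // klinearN. Qed.

Lemma klinear_sum f : klinear f ->
  forall n (F : 'I_n -> V), f (\sum_(i < n) F i) = \sum_(i < n) f (F i).
Proof.
move=> lf; elim=> [|n IHn] F; first by rewrite !big_ord0 klinear0.
by rewrite !big_ord_recr /= klinearD // IHn.
Qed.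

Lemma klinear_add f g : klinear f -> klinear g -> klinear (fun x => f x + g x).
Proof. by move=> lf lg a x y; rewrite lf lg scalerDr addrACA. Qed.

Lemma klinear_comp (U : lmodType k) f (g : U -> V) :
  klinear f -> klinear g -> klinear (fun x => f (g x)).
Proof. by move=> lf lg a x y; rewrite lg lf. Qed.

(* The power rule, with F n standing for X^n. *)
Lemma scale_power_rule (F : nat -> V) i j :
  i%:R *: F (i.-1 + j)%N + j%:R *: F (i + j.-1)%N = (i + j)%:R *: F (i + j).-1.
Proof.
case: i => [|i]; first by rewrite scale0r add0r.
case: j => [|j]; first by rewrite scale0r addr0 !addn0.
have -> : (i.+1.-1 + j.+1 = (i.+1 + j.+1).-1)%N by lia.
have -> : (i.+1 + j.+1.-1 = (i.+1 + j.+1).-1)%N by lia.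
by rewrite -scalerDl -natrD.
Qed.

End KLinear.

Section Span.
Variables (k : fieldType) (V : lmodType k) (P : V -> Prop).

Lemma in_span_gen x : P x -> in_span P x.
Proof.
move=> Px; exists 1%N, (fun=> 1), (fun=> x); split=> //.
by rewrite big_ord1 scale1r.
Qed.

Lemma in_span0 : in_span P 0.
Proof. by exists 0%N, (fun=> 0), (fun=> 0); split; [case | rewrite big_ord0]. Qed.

Lemma in_spanZ a x : in_span P x -> in_span P (a *: x).
Proof.
case=> n [c [v [Pv ->]]]; exists n, (fun i => a * c i), v; split=> //.
by rewrite scaler_sumr; apply: eq_bigr => i _; rewrite scalerA.
Qed.

Lemma in_spanD x y : in_span P x -> in_span P y -> in_span P (x + y).
Proof.
case=> n1 [c1 [v1 [Pv1 ->]]]; case=> n2 [c2 [v2 [Pv2 ->]]].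
pose glue T (f1 : 'I_n1 -> T) (f2 : 'I_n2 -> T) i :=
  match split i with inl j => f1 j | inr j => f2 j end.
exists (n1 + n2)%N, (glue _ c1 c2), (glue _ v1 v2); split.
  by move=> i; rewrite /glue; case: (split i).
have split_l j : split (lshift n2 j) = inl j := unsplitK (inl j).
have split_r j : split (rshift n1 j) = inr j := unsplitK (inr j).
by rewrite big_split_ord /glue; congr (_ + _); apply: eq_bigr => i _;
  rewrite ?split_l ?split_r.
Qed.

Lemma in_span_sum n (F : 'I_n -> V) :
  (forall i, in_span P (F i)) -> in_span P (\sum_(i < n) F i).
Proof.
elim: n F => [|n IHn] F PF; first by rewrite big_ord0; exact: in_span0.
by rewrite big_ord_recr; apply: in_spanD => //; apply: IHn.
Qed.

Lemma klinear_span (W : lmodType k) (f : V -> W) : klinear f ->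
  forall a x y, in_span P x -> in_span P y -> f (a *: x + y) = a *: f x + f y.
Proof. by move=> lf a x y _ _; apply: lf. Qed.

End Span.

Section LinearOnSpan.
Variables (k : fieldType) (V W : lmodType k) (P : V -> Prop) (f : V -> W).
Hypothesis f_lin : forall a x y,
  in_span P x -> in_span P y -> f (a *: x + y) = a *: f x + f y.

Lemma span_linear0 : f 0 = 0.
Proof.
have span0 := @in_span0 _ _ P.
have := f_lin 1 span0 span0; rewrite scale1r addr0 scale1r => f00.
by apply: (addrI (f 0)); rewrite addr0 -f00.
Qed.

Lemma span_linear_comb n (c : 'I_n -> k) (v : 'I_n -> V) : (forall i, P (v i)) ->
  f (\sum_(i < n) c i *: v i) = \sum_(i < n) c i *: f (v i).
Proof.
elim: n c v => [|n IHn] c v Pv; first by rewrite !big_ord0 span_linear0.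
rewrite !big_ord_recr /= [in LHS]addrC [RHS]addrC f_lin ?IHn //.
  exact: in_span_gen.
by exists n, (fun i => c (widen_ord (leqnSn n) i)), (fun i => v (widen_ord (leqnSn n) i)).
Qed.

Lemma in_span_map (Q : W -> Prop) : (forall x, P x -> in_span Q (f x)) ->
  forall x, in_span P x -> in_span Q (f x).
Proof.
move=> PQ x [n [c [v [Pv ->]]]]; rewrite span_linear_comb //.
by apply: in_span_sum => i; apply/in_spanZ/PQ.
Qed.

End LinearOnSpan.

Lemma span_linear_ext (k : fieldType) (V W : lmodType k) (P : V -> Prop) (f g : V -> W) :
  (forall a x y, in_span P x -> in_span P y -> f (a *: x + y) = a *: f x + f y) ->
  (forall a x y, in_span P x -> in_span P y -> g (a *: x + y) = a *: g x + g y) ->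
  (forall x, P x -> f x = g x) -> forall x, in_span P x -> f x = g x.
Proof.
move=> lf lg fg _ [n [c [v [Pv ->]]]].
rewrite (span_linear_comb lf) // (span_linear_comb lg) //.
by apply: eq_bigr => i _; rewrite fg.
Qed.

Section TensorProduct.
Variables (k : fieldType) (A S T : lmodType k) (t : A -> S -> T).
Hypothesis ht : is_tensor_product t.

Lemma tensor_ext (W : lmodType k) (g1 g2 : T -> W) : klinear g1 -> klinear g2 ->
  (forall a s, g1 (t a s) = g2 (t a s)) -> g1 =1 g2.
Proof.
move=> lg1 lg2 eq_g; have [[tl tr] univ] := ht.
have bil : kbilinear (fun a s => g1 (t a s)).
  by split=> [s|a] c x y /=; rewrite ?tl ?tr lg1.
by have [_ uniq] := univ W _ bil; apply: uniq => // a s; rewrite eq_g.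
Qed.

Lemma tensor_lift (W : lmodType k) (f : A -> S -> W) : kbilinear f ->
  exists g : T -> W, klinear g /\ forall a s, g (t a s) = f a s.
Proof. by move=> bil; have [+ _] := ht.2 W f bil. Qed.

End TensorProduct.

Section EigenProduct.
Variables (k : fieldType) (B : lmodType k) (mul : B -> B -> B) (s : B -> B).
Hypotheses (mul_bil : kbilinear mul) (s_aut : is_alg_aut mul s).

Lemma eigen_mul a b x y : eigen s a x -> eigen s b y -> eigen s (a * b) (mul x y).
Proof.
move=> ex ey; rewrite /eigen s_aut.2.2 ex ey.
by rewrite (klinearZ (mul_bil.1 _)) (klinearZ (mul_bil.2 _)) scalerA.
Qed.

End EigenProduct.

Section AlgebraEigen.
Variables (k : fieldType) (S : comAlgType k) (s : S -> S).
Hypothesis s_aut : is_alg_aut *%R s.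

Lemma mulr_kbilinear : kbilinear (@GRing.mul S).
Proof.
by split=> [y|x] a x1 x2 /=; rewrite ?mulrDl ?mulrDr -?scalerAl -?scalerAr.
Qed.

Lemma alg_aut1 : s 1 = 1.
Proof.
have [_ [[g _ gK] sM]] := s_aut.
by have := sM 1 (g 1); rewrite mul1r gK mulr1.
Qed.

Lemma eigen_mulr a b x y : eigen s a x -> eigen s b y -> eigen s (a * b) (x * y).
Proof. exact: (eigen_mul mulr_kbilinear s_aut). Qed.

Lemma eigen_expr a x i : eigen s a x -> eigen s (a ^+ i) (x ^+ i).
Proof.
move=> ex; elim: i => [|i IHi]; first by rewrite /eigen !expr0 alg_aut1 scale1r.
by rewrite !exprS; apply: eigen_mulr.
Qed.

End AlgebraEigen.

Lemma sum_ord_cyclic_shift (Z : zmodType) n (F : nat -> Z) :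
  F n = F 0 -> \sum_(l < n) F l.+1 = \sum_(l < n) F l.
Proof.
case: n => [|n] Fn; first by rewrite !big_ord0.
by rewrite big_ord_recr big_ord_recl /= Fn addrC.
Qed.

Section PrimitiveRoot.
Variables (k : fieldType) (m : nat) (w : k).
Hypothesis hw : m.-primitive_root w.

Let m_gt0 := prim_order_gt0 hw.
Let m_neq0 := prim_root_natf_neq0 hw.

Lemma prim_expr_congr a b l1 l2 : (a + l1 * m = b + l2 * m)%N -> w ^+ a = w ^+ b.
Proof.
move=> e; apply/eqP; rewrite (eq_prim_root_expr hw).
by rewrite -(modnMDl l1 a) -(modnMDl l2 b) addnC e addnC.
Qed.

Lemma prim_root_neq0 : w != 0.
Proof. by rewrite (prim_root_eq0 hw) -lt0n. Qed.

Lemma sum_expr_unity_root (z : k) : z ^+ m = 1 ->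
  \sum_(l < m) z ^+ l = if z == 1 then m%:R else 0.
Proof.
move=> zm; case: eqP => [->|/eqP z_neq1].
  by rewrite (eq_bigr (fun=> 1)) => [|l _]; rewrite ?expr1n // sumr_const card_ord.
have /eqP := subrX1 z m; rewrite zm subrr eq_sym mulf_eq0 subr_eq0.
by rewrite (negbTE z_neq1) => /eqP.
Qed.

Section EigenProjection.
Variables (V : lmodType k) (sg : V -> V).
Hypotheses (sg_lin : klinear sg) (sg_order : forall x, iter m sg x = x).

Definition eigen_proj (p : nat) (x : V) : V :=
  (m%:R)^-1 *: \sum_(l < m) (w ^+ p)^-1 ^+ l *: iter l sg x.

Lemma klinear_iter l : klinear (iter l sg).
Proof. by elim: l => [|l IHl] // a x y; rewrite !iterS IHl sg_lin. Qed.

Lemma klinear_eigen_proj p : klinear (eigen_proj p).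
Proof.
move=> a x y; rewrite /eigen_proj scalerA mulrC -scalerA -scalerDr.
congr (_ *: _); rewrite scaler_sumr -big_split; apply: eq_bigr => l _ /=.
by rewrite klinear_iter scalerDr !scalerA mulrC.
Qed.

Lemma iter_eigen a x l : eigen sg a x -> iter l sg x = a ^+ l *: x.
Proof.
move=> ex; elim: l => [|l IHl]; first by rewrite scale1r.
by rewrite iterS IHl klinearZ // ex scalerA exprSr.
Qed.

Lemma eigen_proj_eigen p x : eigen sg (w ^+ p) (eigen_proj p x).
Proof.
set c := (w ^+ p)^-1.
have cm : c ^+ m = 1 by rewrite /c exprVn -exprM mulnC exprM (prim_expr_order hw) expr1n ?invr1.
have wc : w ^+ p * c = 1 by rewrite mulfV // expf_neq0 // prim_root_neq0.
rewrite /eigen /eigen_proj klinearZ // klinear_sum //.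
have shift l : sg (c ^+ l *: iter l sg x) = w ^+ p *: (c ^+ l.+1 *: iter l.+1 sg x).
  by rewrite klinearZ // scalerA exprS mulrA wc mul1r.
rewrite (eq_bigr _ (fun (l : 'I_m) _ => shift l)) -scaler_sumr scalerA mulrC -scalerA.
congr (_ *: (_ *: _)).
apply: (@sum_ord_cyclic_shift V m (fun l => c ^+ l *: iter l sg x)).
by rewrite cm sg_order expr0.
Qed.

Lemma sum_eigen_proj x : \sum_(p < m) eigen_proj p x = x.
Proof.
rewrite /eigen_proj -scaler_sumr exchange_big /=.
have coef (l : 'I_m) : \sum_(p < m) (w ^+ p)^-1 ^+ l *: iter l sg x =
    (if l == 0 :> nat then m%:R else 0) *: iter l sg x.
  rewrite -scaler_suml; congr (_ *: _).
  rewrite (eq_bigr (fun p : 'I_m => ((w ^+ l)^-1) ^+ p)) => [|p _]; last first.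
    by rewrite !exprVn -!exprM mulnC.
  rewrite sum_expr_unity_root; last first.
    by rewrite exprVn -exprM mulnC exprM (prim_expr_order hw) expr1n ?invr1.
  by rewrite invr_eq1 -(expr0 w) (eq_prim_root_expr hw) mod0n modn_small.
rewrite (eq_bigr _ (fun l _ => coef l)) (bigD1 (Ordinal m_gt0)) //= big1 => [|l].
  by rewrite addr0 scalerA mulVf // scale1r.
move=> neq; have /negbTE -> : l != 0 :> nat by apply: contra neq => /eqP l0; apply/eqP/val_inj.
by rewrite scale0r.
Qed.

Lemma eigen_proj_eigenvector n x p : eigen sg (w ^+ n) x -> (p < m)%N ->
  eigen_proj p x = if (n %% m == p)%N then x else 0.
Proof.
move=> ex pm; rewrite /eigen_proj.
have wp0 : w ^+ p != 0 by rewrite expf_neq0 // prim_root_neq0.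
rewrite (eq_bigr (fun l : 'I_m => (w ^+ n / w ^+ p) ^+ l *: x)) => [|l _]; last first.
  by rewrite (iter_eigen _ ex) scalerA -exprMn mulrC.
rewrite -scaler_suml sum_expr_unity_root; last first.
  by rewrite exprMn exprVn -!exprM !(mulnC _ m) !exprM (prim_expr_order hw) !expr1n invr1 mulr1.
have -> : (w ^+ n / w ^+ p == 1) = (n %% m == p)%N.
  by rewrite (can2_eq (divfK wp0) (mulfK wp0)) mul1r (eq_prim_root_expr hw) (modn_small pm).
case: ifP => _; last by rewrite scale0r scaler0.
by rewrite scalerA mulVf // scale1r.
Qed.

Lemma sum_eigen_proj_eigenvector (Z : zmodType) (F : nat -> V -> Z) n x :
  eigen sg (w ^+ n) x -> (forall p, F p 0 = 0) ->
  \sum_(p < m) F p (eigen_proj p x) = F (n %% m)%N x.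
Proof.
move=> ex F0; have nm := ltn_pmod n m_gt0.
rewrite (bigD1 (Ordinal nm)) //= big1 => [|p].
  by rewrite (eigen_proj_eigenvector ex nm) eqxx addr0.
rewrite -val_eqE /= eq_sym => /negbTE neq_p.
by rewrite (eigen_proj_eigenvector ex (ltn_ord p)) neq_p F0.
Qed.

End EigenProjection.
End PrimitiveRoot.

Section Grading.
Variables (k : fieldType) (m : nat) (w : k).
Hypothesis hw : m.-primitive_root w.
Variables (A : lmodType k) (mulA : A -> A -> A) (S : comAlgType k).
Hypothesis hmulA : kbilinear mulA.
Variables (s1 : A -> A) (s2 : S -> S).
Hypotheses (hs1 : is_alg_aut mulA s1) (hs2 : is_alg_aut *%R s2).
Hypotheses (hs1m : forall a, iter m s1 a = a) (hs2m : forall s, iter m s2 s = s).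
Variables (T : lmodType k) (t : A -> S -> T).
Hypothesis ht : is_tensor_product t.
Variable L : S -> T -> T.
Hypotheses (hLt : forall s a s', L s (t a s') = t a (s * s'))
  (hL_lin : forall s, klinear (L s)).

Local Notation P := (tens_piece m w t s1 s2).

Let m_gt0 := prim_order_gt0 hw.
Let t_l s : klinear (t^~ s) := ht.1.1 s.
Let t_r a : klinear (t a) := ht.1.2 a.

Lemma eigenA_mul e e' x y : eigen s1 (w ^+ e) x -> eigen s1 (w ^+ e') y ->
  eigen s1 (w ^+ (e + e')) (mulA x y).
Proof. by rewrite exprD; apply: (eigen_mul hmulA hs1). Qed.

Lemma eigenS_mul e e' x y : eigen s2 (w ^+ e) x -> eigen s2 (w ^+ e') y ->
  eigen s2 (w ^+ (e + e')) (x * y).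
Proof. by rewrite exprD; apply: (eigen_mulr hs2). Qed.

Lemma tens_piece_tensor j pa ps a s : eigen s1 (w ^+ pa) a -> eigen s2 (w ^+ ps) s ->
  w ^+ j = w ^+ (pa + ps) -> P j (t a s).
Proof.
move=> ea es wj; apply: in_span_gen.
have qm := ltn_pmod ps m_gt0.
exists (Ordinal qm), a, s; split; last by rewrite /= (prim_expr_mod hw).
have -> : w ^+ (j + (m - ps %% m)) = w ^+ pa; last by [].
rewrite exprD wj -exprD; apply: (prim_expr_congr hw (l1 := 0) (l2 := (ps %/ m).+1)).
by have := divn_eq ps m; nia.
Qed.

Lemma tens_piece_map (f : T -> T) j j' : klinear f ->
  (forall pa ps a s, eigen s1 (w ^+ pa) a -> eigen s2 (w ^+ ps) s ->
     w ^+ j = w ^+ (pa + ps) -> P j' (f (t a s))) ->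
  forall x, P j x -> P j' (f x).
Proof.
move=> lf fP; apply: in_span_map; first exact: klinear_span.
move=> _ [q [a [s [ea [es ->]]]]]; apply: fP ea es _.
by apply: (prim_expr_congr hw (l1 := 1) (l2 := 0)); have := ltn_ord q; lia.
Qed.

Lemma tens_piece_congr i j x : w ^+ i = w ^+ j -> P i x -> P j x.
Proof.
move=> wij; apply: (tens_piece_map (f := id)) => // pa ps a s ea es wi.
by apply: tens_piece_tensor ea es _; rewrite -wij.
Qed.

Lemma tensor_ext_homogeneous (g1 g2 : T -> T) : klinear g1 -> klinear g2 ->
  (forall p q a s, eigen s1 (w ^+ p) a -> eigen s2 (w ^+ q) s ->
     g1 (t a s) = g2 (t a s)) ->
  g1 =1 g2.
Proof.
move=> lg1 lg2 eq_g; apply: (tensor_ext ht lg1 lg2) => a s.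
rewrite -(sum_eigen_proj hw s1 a) (klinear_sum (t_l s)).
rewrite (klinear_sum lg1) (klinear_sum lg2); apply: eq_bigr => p _.
rewrite -(sum_eigen_proj hw s2 s) (klinear_sum (t_r _)).
rewrite (klinear_sum lg1) (klinear_sum lg2); apply: eq_bigr => q _.
by apply: eq_g; [apply: (eigen_proj_eigen hw hs1.1 hs1m) | apply: (eigen_proj_eigen hw hs2.1 hs2m)].
Qed.

Lemma L1 : L 1 =1 id.
Proof. by apply: (tensor_ext ht (hL_lin 1)) => // a s; rewrite hLt mul1r. Qed.

Lemma L_mul s s' x : L s (L s' x) = L (s * s') x.
Proof.
apply: (tensor_ext ht (klinear_comp (hL_lin s) (hL_lin s')) (hL_lin _)) => a s''.
by rewrite !hLt mulrA.
Qed.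

Lemma tens_piece_L e s j x : eigen s2 (w ^+ e) s -> P j x -> P (j + e) (L s x).
Proof.
move=> es; apply: tens_piece_map => // pa ps a s' ea es' wj.
rewrite hLt; apply: tens_piece_tensor ea (eigenS_mul es es') _.
by rewrite exprD wj -!exprD; congr (_ ^+ _); lia.
Qed.

Section Extension.
Variables (u v : S).
Hypotheses (hu : eigen s2 w u) (huv : u * v = 1).
Variable mulT : T -> T -> T.
Hypothesis hmulT : kbilinear mulT.
Hypothesis hmulTt : forall a b s s', mulT (t a s) (t b s') = t (mulA a b) (s * s').
Hypothesis hL_cen : forall s x y,
  L s (mulT x y) = mulT (L s x) y /\ L s (mulT x y) = mulT x (L s y).
Variable d : T -> T.
Hypothesis hd0 : forall x, P 0 x -> P 0 (d x).
Hypothesis hd_lin : forall c x y, P 0 x -> P 0 y -> d (c *: x + y) = c *: d x + d y.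
Hypothesis hd_der : forall x y, P 0 x -> P 0 y -> d (mulT x y) = mulT (d x) y + mulT x (d y).

Let mulT_l y : klinear (mulT^~ y) := hmulT.1 y.
Let mulT_r x : klinear (mulT x) := hmulT.2 x.

Lemma eigen_v : eigen s2 (w ^+ (m - 1)) v.
Proof.
have wm1 : w ^+ (m - 1) * w = 1 by rewrite -exprSr subn1 prednK // (prim_expr_order hw).
have s2v_u : w *: (s2 v * u) = 1 by rewrite scalerAr -hu -hs2.2.2 mulrC huv (alg_aut1 hs2).
rewrite /eigen -[s2 v]mulr1 -huv mulrA -[s2 v * u]scale1r -wm1 -scalerA s2v_u.
by rewrite -scalerAl mul1r.
Qed.

Lemma eigen_u_expr i : eigen s2 (w ^+ i) (u ^+ i).
Proof. exact: (eigen_expr hs2 i hu). Qed.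

Lemma eigen_v_expr i : eigen s2 (w ^+ ((m - 1) * i)) (v ^+ i).
Proof. by rewrite exprM; apply: eigen_expr eigen_v. Qed.

Lemma uv_expr i : u ^+ i * v ^+ i = 1.
Proof. by rewrite -exprMn huv expr1n. Qed.

Lemma mulT_L s s' x y : mulT (L s x) (L s' y) = L (s * s') (mulT x y).
Proof. by rewrite -(hL_cen s x (L s' y)).1 -(hL_cen s' x y).2 L_mul. Qed.

Lemma tens_piece0_Lum x : P 0 x -> P 0 (L (u ^+ m) x).
Proof.
move=> hx; apply: tens_piece_congr (tens_piece_L (eigen_u_expr m) hx).
by rewrite add0n (prim_expr_order hw) expr0.
Qed.

(* On the degree-0 part, [d, L_{u^m}] = m L_{u^(m-1)} mul_du: mul_du is the
   multiplication by D(u) for the extension D to be built. *)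
Definition mul_du (b : T) : T :=
  (m%:R)^-1 *: L (v ^+ (m - 1)) (d (L (u ^+ m) b) - L (u ^+ m) (d b)).

Lemma d_Lum z : d (L (u ^+ m) z) = L (u ^+ m) (d z) + m%:R *: L (u ^+ (m - 1)) (mul_du z).
Proof.
rewrite /mul_du (klinearZ (hL_lin _)) scalerA mulfV ?(prim_root_natf_neq0 hw) //.
by rewrite scale1r L_mul uv_expr L1 addrC subrK.
Qed.

Lemma mul_du_linear a x y : P 0 x -> P 0 y ->
  mul_du (a *: x + y) = a *: mul_du x + mul_du y.
Proof.
move=> hx hy; rewrite /mul_du hL_lin (hd_lin a (tens_piece0_Lum hx) (tens_piece0_Lum hy)).
rewrite (hd_lin a hx hy) hL_lin opprD addrACA -scalerBr hL_lin scalerDr !scalerA.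
by rewrite mulrC.
Qed.

Lemma mul_du_piece b : P 0 b -> P 1 (mul_du b).
Proof.
move=> hb; apply: in_spanZ.
have hdiff : P 0 (d (L (u ^+ m) b) - L (u ^+ m) (d b)).
  apply: in_spanD; first exact/hd0/tens_piece0_Lum.
  by rewrite -scaleN1r; apply/in_spanZ/tens_piece0_Lum/hd0.
apply: tens_piece_congr (tens_piece_L (eigen_v_expr (m - 1)) hdiff).
by apply: (prim_expr_congr hw (l1 := 1) (l2 := m.-1)); rewrite -subn1; have := m_gt0; nia.
Qed.

Lemma mul_du_cen b b' : P 0 b -> P 0 b' ->
  mul_du (mulT b b') = mulT (mul_du b) b' /\ mul_du (mulT b b') = mulT b (mul_du b').
Proof.
move=> hb hb'; split; rewrite /mul_du.
  have -> : d (L (u ^+ m) (mulT b b')) - L (u ^+ m) (d (mulT b b')) =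
            mulT (d (L (u ^+ m) b) - L (u ^+ m) (d b)) b'.
    rewrite (hL_cen _ b b').1 (hd_der (tens_piece0_Lum hb) hb') (hd_der hb hb').
    rewrite (klinearD (hL_lin _)) -!(hL_cen _ _ _).1 (klinearB (mulT_l _)) opprD addrACA.
    by rewrite subrr addr0 (hL_cen _ (d b) b').1.
  by rewrite (hL_cen _ _ _).1 (klinearZ (mulT_l _)).
have -> : d (L (u ^+ m) (mulT b b')) - L (u ^+ m) (d (mulT b b')) =
          mulT b (d (L (u ^+ m) b') - L (u ^+ m) (d b')).
  rewrite (hL_cen _ b b').2 (hd_der hb (tens_piece0_Lum hb')) (hd_der hb hb').
  rewrite (klinearD (hL_lin _)) -!(hL_cen _ _ _).2 (klinearB (mulT_r _)) opprD addrACA.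
  by rewrite subrr add0r (hL_cen _ b (d b')).2.
by rewrite (hL_cen _ _ _).2 (klinearZ (mulT_r b)).
Qed.

Lemma mul_du_Lum b b' : P 0 b -> P 0 b' ->
  mul_du (L (u ^+ m) (mulT b b')) = L (u ^+ m) (mul_du (mulT b b')).
Proof.
move=> hb hb'; rewrite {1}(hL_cen _ b b').1 (mul_du_cen (tens_piece0_Lum hb) hb').2.
by rewrite -(hL_cen _ _ _).1 -(mul_du_cen hb hb').2.
Qed.

(* The Leibniz rule forces D (u^i b) = u^i d b + i u^(i-1) D(u) b. *)
Definition ext_d (i : nat) (b : T) : T :=
  L (u ^+ i) (d b) + i%:R *: L (u ^+ i.-1) (mul_du b).

Lemma ext_d_linear i a x y : P 0 x -> P 0 y ->
  ext_d i (a *: x + y) = a *: ext_d i x + ext_d i y.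
Proof.
move=> hx hy; rewrite /ext_d (hd_lin a hx hy) hL_lin (mul_du_linear a hx hy) hL_lin.
by rewrite scalerDr !scalerA [_ * a]mulrC -!scalerA scalerDr addrACA.
Qed.

Lemma ext_d0 i : ext_d i 0 = 0.
Proof.
have z0 : P 0 0 by exact: in_span0.
have := ext_d_linear i 1 z0 z0; rewrite scale1r addr0 scale1r => e.
by apply: (addrI (ext_d i 0)); rewrite addr0 -e.
Qed.

Lemma ext_d_piece i b : P 0 b -> P i (ext_d i b).
Proof.
move=> hb; apply: in_spanD.
  by have := tens_piece_L (eigen_u_expr i) (hd0 hb); rewrite add0n.
case: i => [|i]; first by rewrite scale0r; exact: in_span0.
by apply: in_spanZ; have := tens_piece_L (eigen_u_expr i) (mul_du_piece hb); rewrite add1n.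
Qed.

Lemma ext_d_mul i j b b' : P 0 b -> P 0 b' ->
  mulT (ext_d i b) (L (u ^+ j) b') + mulT (L (u ^+ i) b) (ext_d j b') =
  ext_d (i + j) (mulT b b').
Proof.
move=> hb hb'; rewrite /ext_d (klinearD (mulT_l _)) (klinearD (mulT_r _)).
rewrite (klinearZ (mulT_l _)) (klinearZ (mulT_r _)) !mulT_L.
rewrite -(mul_du_cen hb hb').1 -(mul_du_cen hb hb').2 -!exprD (hd_der hb hb').
rewrite (klinearD (hL_lin _)) addrACA.
by rewrite (scale_power_rule (fun n => L (u ^+ n) (mul_du (mulT b b')))).
Qed.

(* Degrees add modulo m; wrapping around is paid for by d_Lum. *)
Lemma ext_d_wrap r b b' : P 0 b -> P 0 b' ->
  ext_d r (L (u ^+ m) (mulT b b')) = ext_d (r + m) (mulT b b').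
Proof.
move=> hb hb'; rewrite /ext_d d_Lum mul_du_Lum // (klinearD (hL_lin _)).
rewrite (klinearZ (hL_lin _)) !L_mul -!exprD -addrA; congr (_ + _).
have := m_gt0; case: r => [|r] m_pos; first by rewrite scale0r addr0 !add0n subn1.
have -> : (r.+1 + (m - 1) = (r.+1 + m).-1)%N by lia.
have -> : (r.+1.-1 + m = (r.+1 + m).-1)%N by lia.
by rewrite -scalerDl -natrD addnC.
Qed.

Definition ext_d_tensor (i : nat) (a : A) (s : S) : T := ext_d i (t a (v ^+ i * s)).

Lemma tens_piece0_tensor p q a s : eigen s1 (w ^+ p) a -> eigen s2 (w ^+ q) s ->
  P 0 (t a (v ^+ ((p + q) %% m) * s)).
Proof.
move=> ea es; apply: tens_piece_tensor ea (eigenS_mul (eigen_v_expr _) es) _.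
apply: (prim_expr_congr hw (l1 := (p + q) %/ m + (p + q) %% m) (l2 := 0)).
by have := divn_eq (p + q) m; have := m_gt0; nia.
Qed.

Lemma ext_d_tensor_mul i j a s a' s' : (i < m)%N -> (j < m)%N ->
  P 0 (t a (v ^+ i * s)) -> P 0 (t a' (v ^+ j * s')) ->
  ext_d_tensor ((i + j) %% m) (mulA a a') (s * s') =
  mulT (ext_d_tensor i a s) (t a' s') + mulT (t a s) (ext_d_tensor j a' s').
Proof.
move=> im jm hb hb'.
have t_Lu n a1 s3 : t a1 s3 = L (u ^+ n) (t a1 (v ^+ n * s3)).
  by rewrite hLt mulrA uv_expr mul1r.
rewrite /ext_d_tensor (t_Lu i a s) (t_Lu j a' s') ext_d_mul //.
have prod_tv : mulT (t a (v ^+ i * s)) (t a' (v ^+ j * s')) =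
               t (mulA a a') (v ^+ (i + j) * (s * s')).
  by rewrite hmulTt mulrACA -exprD.
case: (ltnP (i + j) m) => [ij_lt | ij_ge]; first by rewrite modn_small // prod_tv.
set r := (i + j - m)%N; have ij_r : (i + j = r + m)%N by rewrite /r; lia.
rewrite ij_r modnDr modn_small; last by rewrite /r; lia.
rewrite -ext_d_wrap // prod_tv ij_r hLt; congr (ext_d r (t _ _)).
by rewrite [RHS]mulrA exprD [u ^+ m * _]mulrCA uv_expr mulr1.
Qed.

Definition ext_d_bil (a : A) (s : S) : T :=
  \sum_(p < m) \sum_(q < m)
    ext_d_tensor ((p + q) %% m) (eigen_proj m w s1 p a) (eigen_proj m w s2 q s).

Lemma ext_d_bil_bilinear : kbilinear ext_d_bil.
Proof.
have eA p a := eigen_proj_eigen hw hs1.1 hs1m p a.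
have eS q s := eigen_proj_eigen hw hs2.1 hs2m q s.
split=> [s|a] c x y; rewrite /ext_d_bil scaler_sumr -big_split; apply: eq_bigr => p _;
  rewrite scaler_sumr -big_split; apply: eq_bigr => q _ /=; rewrite /ext_d_tensor.
  by rewrite (klinear_eigen_proj _ _ hs1.1) t_l ext_d_linear //; apply: tens_piece0_tensor.
rewrite (klinear_eigen_proj _ _ hs2.1) mulrDr -scalerAr t_r.
by rewrite ext_d_linear //; apply: tens_piece0_tensor.
Qed.

Section ExtendedDerivation.
Variable D : T -> T.
Hypotheses (hD_lin : klinear D) (hD_t : forall a s, D (t a s) = ext_d_bil a s).

Lemma D_tensor p q a s : eigen s1 (w ^+ p) a -> eigen s2 (w ^+ q) s ->
  D (t a s) = ext_d_tensor ((p + q) %% m) a s.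
Proof.
move=> ea es; rewrite hD_t /ext_d_bil.
rewrite (sum_eigen_proj_eigenvector hw hs1.1 (F := fun p a =>
  \sum_(q < m) ext_d_tensor ((p + q) %% m) a (eigen_proj m w s2 q s)) ea); last first.
  by move=> p'; apply: big1 => l _; rewrite /ext_d_tensor (klinear0 (t_l _)) ext_d0.
rewrite (sum_eigen_proj_eigenvector hw hs2.1
  (F := fun q s => ext_d_tensor ((p %% m + q) %% m) a s) es) ?modnDm //.
by move=> q'; rewrite /ext_d_tensor mulr0 (klinear0 (t_r _)) ext_d0.
Qed.

Lemma D_piece j x : P j x -> P j (D x).
Proof.
apply: tens_piece_map => // pa ps a s ea es wj; rewrite (D_tensor ea es).
apply: tens_piece_congr (ext_d_piece _ (tens_piece0_tensor ea es)).
by rewrite (prim_expr_mod hw) wj.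
Qed.

Lemma D_extends x : P 0 x -> D x = d x.
Proof.
move=> hx; apply: (span_linear_ext (klinear_span hD_lin) hd_lin _ hx).
move=> _ [q [a [s [ea [es ->]]]]].
have deg0 : ((0 + (m - q) + q) %% m = 0)%N by rewrite add0n subnK ?modnn // ltnW.
rewrite (D_tensor ea es) deg0.
by rewrite /ext_d_tensor /ext_d expr0 mul1r scale0r addr0 L1.
Qed.

Lemma D_leibniz_tensor p q p' q' a s a' s' :
  eigen s1 (w ^+ p) a -> eigen s2 (w ^+ q) s ->
  eigen s1 (w ^+ p') a' -> eigen s2 (w ^+ q') s' ->
  D (mulT (t a s) (t a' s')) = mulT (D (t a s)) (t a' s') + mulT (t a s) (D (t a' s')).
Proof.
move=> ea es ea' es'.
rewrite hmulTt (D_tensor (eigenA_mul ea ea') (eigenS_mul es es')).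
rewrite (D_tensor ea es) (D_tensor ea' es').
have -> : ((p + p' + (q + q')) %% m = ((p + q) %% m + (p' + q') %% m) %% m)%N.
  by rewrite modnDm; congr (_ %% _)%N; lia.
by apply: ext_d_tensor_mul; rewrite ?ltn_pmod //; apply: tens_piece0_tensor.
Qed.

Lemma D_leibniz x y : D (mulT x y) = mulT (D x) y + mulT x (D y).
Proof.
move: x; apply: (tensor_ext_homogeneous (g1 := fun x => D (mulT x y))
                   (g2 := fun x => mulT (D x) y + mulT x (D y))).
- exact: klinear_comp hD_lin (mulT_l y).
- exact: klinear_add (klinear_comp (mulT_l y) hD_lin) (mulT_l (D y)).
move=> p q a s ea es /=; move: y.
apply: (tensor_ext_homogeneous (g1 := fun y => D (mulT (t a s) y))
          (g2 := fun y => mulT (D (t a s)) y + mulT (t a s) (D y))).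
- exact: klinear_comp hD_lin (mulT_r _).
- exact: klinear_add (mulT_r _) (klinear_comp (mulT_r _) hD_lin).
by move=> p' q' a' s' ea' es' /=; apply: D_leibniz_tensor ea es ea' es'.
Qed.

End ExtendedDerivation.

Lemma graded_derivation_extension : exists D : T -> T,
  [/\ is_derivation mulT D, forall (j : 'I_m) x, P j x -> P j (D x)
    & forall x, P 0 x -> D x = d x].
Proof.
have [D [D_lin D_t]] := tensor_lift ht ext_d_bil_bilinear.
exists D; split=> [|j x|x]; last exact: D_extends.
  by split=> //; exact: D_leibniz.
exact: D_piece.
Qed.

End Extension.
End Grading.

Unset Implicit Arguments.

Theorem lemma4p8
  (k : fieldType) (m : nat) (w : k) (hw : m.-primitive_root w)
  (A : lmodType k) (mulA : A -> A -> A) (hmulA : kbilinear mulA)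
  (hperf : perfect mulA)
  (S : comAlgType k)
  (s1 : A -> A) (s2 : S -> S)
  (hs1 : is_alg_aut mulA s1) (hs2 : is_alg_aut *%R s2)
  (hs1m : forall a, iter m s1 a = a) (hs2m : forall s, iter m s2 s = s)
  (u : S) (hu : eigen s2 w u) (hu_inv : exists v : S, u * v = 1)
  (* A (x) S as a tensor product, with its algebra product *)
  (T : lmodType k) (t : A -> S -> T) (ht : is_tensor_product t)
  (mulT : T -> T -> T) (hmulT : kbilinear mulT)
  (hmulTt : forall a b s s', mulT (t a s) (t b s') = t (mulA a b) (s * s'))
  (* C(A), realized as a k-vector space C embedded in maps A -> A *)
  (C : lmodType k) (iota : C -> A -> A)
  (hiota_lin : forall (c : k) (x y : C) (a : A),
      iota (c *: x + y) a = c *: iota x a + iota y a)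
  (hiota_inj : forall x y, iota x =1 iota y -> x = y)
  (hiota_in : forall x, in_centroid mulA (iota x))
  (hiota_onto : forall g, in_centroid mulA g -> exists x, iota x =1 g)
  (* C(A) (x) S and psi : gamma (x) s |-> gamma (x) L_s *)
  (U : lmodType k) (tU : C -> S -> U) (htU : is_tensor_product tU)
  (psi : U -> T -> T)
  (hpsi_lin : forall (c : k) (x y : U) (z : T),
      psi (c *: x + y) z = c *: psi x z + psi y z)
  (hpsi_lin2 : forall x, klinear (psi x))
  (hpsi_def : forall g s a s', psi (tU g s) (t a s') = t (iota g a) (s * s'))
  (* psi is an isomorphism onto C(A (x) S) *)
  (hpsi_in : forall x, in_centroid mulT (psi x))
  (hpsi_inj : forall x y, psi x =1 psi y -> x = y)
  (hpsi_onto : forall g, in_centroid mulT g -> exists x, psi x =1 g) :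
  (* every derivation d of the fixed-point subalgebra (A (x) S)_0 ... *)
  forall d : T -> T,
    (forall x, tens_piece m w t s1 s2 0 x -> tens_piece m w t s1 s2 0 (d x)) ->
    (forall (c : k) x y, tens_piece m w t s1 s2 0 x -> tens_piece m w t s1 s2 0 y ->
        d (c *: x + y) = c *: d x + d y) ->
    (forall x y, tens_piece m w t s1 s2 0 x -> tens_piece m w t s1 s2 0 y ->
        d (mulT x y) = mulT (d x) y + mulT x (d y)) ->
  (* ... is the restriction of a graded-piece-preserving derivation of A (x) S *)
  exists D : T -> T,
    is_derivation mulT D /\
    (forall (j : 'I_m) x, tens_piece m w t s1 s2 j x -> tens_piece m w t s1 s2 j (D x)) /\
    (forall x, tens_piece m w t s1 s2 0 x -> D x = d x).
Proof.
move=> d hd0 hd_lin hd_der.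
have [v huv] := hu_inv.
have [one one_id] : exists one, iota one =1 id by apply: hiota_onto; split=> // x y.
pose L s := psi (tU one s).
have hLt s a s' : L s (t a s') = t a (s * s') by rewrite /L hpsi_def one_id.
have [D [D_der D_piece D_ext]] := graded_derivation_extension hw hmulA hs1 hs2 hs1m hs2m
  ht hLt (fun s => hpsi_lin2 _) hu huv hmulT hmulTt (fun s => (hpsi_in _).2) hd0 hd_lin hd_der.
by exists D.
Qed.
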